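(* Let $A=(\alpha_{i,j})$ be an $n\times n$ ($n\ge 2$) symmetric exceptional magic matrix with rational entries, and let $s(A)$ be its common row/column sum. Then there exists a tree $(\mathcal R,\gamma)$ on $\{1,\dots,n\}$ such that $$A=s(A)I+\sum_{T\in\mathcal R}\gamma(T)A(T),$$ with $\gamma(T_0)=\inf\{-\alpha_{i,j}:i\neq j\}$.
   Context: A square matrix is magic if all its row sums and column sums are equal (to $s(A)$). It is exceptional if for every triple $(i,j,k)$ of distinct indices, the maximum of $\alpha_{i,j},\alpha_{j,k},\alpha_{k,i}$ is attained at least twice. $T_0=\{1,\dots,n\}$. A ''species of tree'' is a family $\mathcal R$ of subsets of $T_0$ containing $T_0$, each of cardinality $\ge2$, any two of which are either disjoint or nested. A tree is a pair $(\mathcal R,\gamma)$ with $\mathcal R$ a species of tree and $\gamma:\mathcal R\to\mathbf Q$ with $\gamma(T)>0$ for $T\neq T_0$. For $T$ of cardinality $n(T)\ge2$, $A(T)=(\alpha_{i,j})$ has $\alpha_{i,j}=-1$ if $i\ne j$, $\{i,j\}\subset T$, $\alpha_{i,i}=n(T)-1$ if $i\in T$, $0$ otherwise. $I$ is the identity matrix. *)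

From mathcomp Require Import all_boot all_order all_algebra.
Set Implicit Arguments. Unset Strict Implicit. Unset Printing Implicit Defensive.
Import Order.TTheory GRing.Theory Num.Theory.
Local Open Scope ring_scope.

Definition is_magic (n : nat) (A : 'M[rat]_n) (s : rat) : Prop :=
  (forall i : 'I_n, \sum_(j < n) A i j = s) /\
  (forall j : 'I_n, \sum_(i < n) A i j = s).

Definition is_exceptional (n : nat) (A : 'M[rat]_n) : Prop :=
  forall i j k : 'I_n, i != j -> j != k -> k != i ->
    let m := Num.max (A i j) (Num.max (A j k) (A k i)) in
    (2 <= (A i j == m) + (A j k == m) + (A k i == m))%N.

(* species of tree on T0 = setT *)
Definition is_species (n : nat) (R : {set {set 'I_n}}) : Prop :=
  [set: 'I_n] \in R /\
  (forall T, T \in R -> (2 <= #|T|)%N) /\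
  (forall T U, T \in R -> U \in R ->
     [disjoint T & U] \/ T \subset U \/ U \subset T).

Definition is_tree (n : nat) (R : {set {set 'I_n}}) (gamma : {set 'I_n} -> rat)
  : Prop :=
  is_species R /\ (forall T, T \in R -> T != [set: 'I_n] -> 0 < gamma T).

Definition AT (n : nat) (T : {set 'I_n}) : 'M[rat]_n :=
  \matrix_(i, j)
    if i == j then (if i \in T then #|T|%:R - 1 else 0)
    else if (i \in T) && (j \in T) then -1 else 0.

From mathcomp Require Import all_boot all_order all_algebra.
Import Order.TTheory GRing.Theory Num.Theory.
Local Open Scope ring_scope.
Set Implicit Arguments. Unset Strict Implicit. Unset Printing Implicit Defensive.

(* Put d := -A. Exceptionality says that in every triangle the minimum of d is
   attained twice, so for each threshold t the relation "x = y or t <= d x y"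
   is an equivalence. Its classes, taken at the successive distinct values
   v_0 < v_1 < ... of d, form a laminar family of blocks containing T0 (at v_0).
   Giving a block the sum of the gaps v_k - v_(k-1) over the levels k at which
   it is a class, the blocks containing i and j receive in total exactly the
   gaps of the levels v_k <= d i j, i.e. d i j. This fixes the off-diagonal
   entries; the diagonal follows since every A(T) has zero row sums and A is
   magic. *)

Section Hierarchy.

Variables (R : realDomainType) (T : finType) (d : T -> T -> R).
Hypothesis dC : forall x y, d x y = d y x.
Hypothesis d_min : forall x y z, x != y -> y != z -> z != x ->
  Num.min (d x y) (d y z) <= d z x.

Definition linked (t : R) (x y : T) := (x == y) || (t <= d x y).

Lemma linked_refl t x : linked t x x.
Proof. by rewrite /linked eqxx. Qed.

Lemma linked_sym t x y : linked t x y = linked t y x.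
Proof. by rewrite /linked eq_sym dC. Qed.

Lemma linked_trans t x y z : linked t x y -> linked t y z -> linked t x z.
Proof.
rewrite /linked; have [-> //|xy] := eqVneq x y.
have [<-|yz] := eqVneq y z; first by rewrite (negbTE xy).
have [//|xz] := eqVneq x z; rewrite /= [d x z]dC => txy tyz.
by rewrite (le_trans _ (d_min xy yz _)) 1?eq_sym // le_min txy.
Qed.

Definition block t a : {set T} := [set y | linked t a y].

Lemma block_id t a : a \in block t a.
Proof. by rewrite inE linked_refl. Qed.

Lemma block_eq t a x : x \in block t a -> block t a = block t x.
Proof.
rewrite inE => ax; apply/setP => y; rewrite !inE.
by apply/idP/idP => h; apply: linked_trans h; rewrite // linked_sym.
Qed.

Lemma block_antimono t t' a : t <= t' -> block t' a \subset block t a.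
Proof.
move=> tt'; apply/subsetP => y; rewrite !inE /linked => /orP[-> //|h].
by rewrite (le_trans tt' h) orbT.
Qed.

Lemma block_laminar t t' a b : t <= t' ->
  [disjoint block t a & block t' b] \/ block t' b \subset block t a.
Proof.
move=> tt'; have [|/pred0Pn[x /andP[xa xb]]] := boolP [disjoint _ & _]; first by left.
by right; rewrite (block_eq xb) (block_eq xa) block_antimono.
Qed.

Definition levels : seq R :=
  sort <=%O (undup [seq d p.1 p.2 | p <- enum [pred p : T * T | p.1 != p.2]]).

Lemma levels_sorted : sorted <%O levels.
Proof. by rewrite sort_lt_sorted undup_uniq. Qed.

Lemma mem_levels i j : i != j -> d i j \in levels.
Proof.
by move=> ij; rewrite mem_sort mem_undup; apply/mapP; exists (i, j); rewrite ?mem_enum.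
Qed.

Lemma levelsP x : x \in levels -> exists i j, i != j /\ x = d i j.
Proof.
by rewrite mem_sort mem_undup => /mapP[[i j]]; rewrite mem_enum => ij ->; exists i, j.
Qed.

Lemma leq_levels k l : (k < size levels)%N -> (l < size levels)%N ->
  (levels`_k <= levels`_l) = (k <= l)%N.
Proof. by move=> hk hl; rewrite (lt_sorted_leq_nth 0 levels_sorted). Qed.

Lemma ltn_levels k l : (k < size levels)%N -> (l < size levels)%N ->
  (levels`_k < levels`_l) = (k < l)%N.
Proof. by move=> hk hl; rewrite (lt_sorted_ltn_nth 0 levels_sorted). Qed.

Definition level_block k a := block levels`_k a.

Definition is_level_block k (B : {set T}) := [exists a, level_block k a == B].

Definition hierarchy : {set {set T}} :=
  [set B | [exists k : 'I_(size levels), is_level_block k B] && (1 < #|B|)%N].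

(* The gap of level 0 is v_0 itself, which becomes the weight of T0. *)
Definition level_gap k := levels`_k - (if k is k'.+1 then levels`_k' else 0).

Definition weight (B : {set T}) : R :=
  \sum_(k < size levels | is_level_block k B) level_gap k.

Lemma level_gap_gt0 k : (0 < k)%N -> (k < size levels)%N -> 0 < level_gap k.
Proof.
by case: k => // k _ kN; rewrite subr_gt0 ltn_levels // ltnW.
Qed.

Lemma sum_level_gap p : \sum_(k < p.+1) level_gap k = levels`_p.
Proof.
elim: p => [|p IH]; first by rewrite big_ord1 /level_gap subr0.
by rewrite big_ord_recr /= IH /level_gap addrC subrK.
Qed.

Lemma mem_level_block k i j :
  (j \in level_block k i) = (i == j) || (levels`_k <= d i j).
Proof. by rewrite inE. Qed.

Lemma level_block_in_hierarchy (k : 'I_(size levels)) i j :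
  i != j -> j \in level_block k i -> level_block k i \in hierarchy.
Proof.
move=> ij jB; rewrite inE; apply/andP; split.
  by apply/existsP; exists k; apply/existsP; exists i.
rewrite (leq_trans _ (subset_leq_card (_ : [set i; j] \subset _))) ?cards2 ?ij //.
by apply/subsetP => x /set2P[]->; rewrite ?block_id.
Qed.

Lemma level_blocks_pair (k : 'I_(size levels)) i j : i != j ->
  \sum_(B in hierarchy | (i \in B) && (j \in B) && is_level_block k B) level_gap k
  = if levels`_k <= d i j then level_gap k else 0.
Proof.
move=> ij; have Bi B : is_level_block k B -> i \in B -> B = level_block k i.
  by case/existsP=> a /eqP <- /block_eq.
case: ifP => hk.
  have jB : j \in level_block k i by rewrite mem_level_block hk orbT.
  rewrite (bigD1 (level_block k i)) /=; last first.
    by rewrite (level_block_in_hierarchy ij jB) block_id jB; apply/existsP; exists i.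
  rewrite big1 ?addr0 // => B /andP[/and3P[_ /andP[iB _] kB] nB].
  by rewrite -(Bi B) ?eqxx in nB.
rewrite big1 // => B /and3P[_ /andP[iB jB] kB].
by move: jB; rewrite (Bi B) // mem_level_block (negbTE ij) hk.
Qed.

Lemma sum_weight_pair i j : i != j ->
  \sum_(B in hierarchy | (i \in B) && (j \in B)) weight B = d i j.
Proof.
move=> ij; transitivity
    (\sum_(k < size levels) if levels`_k <= d i j then level_gap k else 0).
  rewrite /weight (exchange_big_dep predT) //=; apply: eq_bigr => k _.
  by rewrite -level_blocks_pair //; apply: eq_bigl => B; rewrite !andbA.
have dij := mem_levels ij; have pN : (index (d i j) levels < size levels)%N.
  by rewrite index_mem.
rewrite -[RHS](nth_index 0 dij) -sum_level_gap (big_ord_widen _ _ pN) -big_mkcond /=.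
by apply: eq_bigl => k; rewrite -{1}(nth_index 0 dij) leq_levels.
Qed.

Lemma levels0_le i j : i != j -> levels`_0 <= d i j.
Proof.
move=> ij; have dij := mem_levels ij.
have pN : (index (d i j) levels < size levels)%N by rewrite index_mem.
by rewrite -(nth_index 0 dij) leq_levels // (leq_ltn_trans _ pN).
Qed.

Lemma level_block0 a : level_block 0 a = setT.
Proof.
by apply/setP => y; rewrite mem_level_block inE; case: eqVneq => // ay; apply: levels0_le.
Qed.

Lemma weight_gt0 B : B \in hierarchy -> B != setT -> 0 < weight B.
Proof.
rewrite inE => /andP[/existsP[k kB] _] nBT.
have notT l : is_level_block l B -> (0 < l)%N.
  rewrite lt0n; apply: contraTneq => ->; apply/existsP => -[a /eqP eB].
  by rewrite -eB level_block0 eqxx in nBT.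
rewrite /weight (bigD1 k) //= ltr_pwDl ?level_gap_gt0 ?notT ?ltn_ord //.
by apply: sumr_ge0 => l /andP[lB _]; rewrite ltW ?level_gap_gt0 ?notT.
Qed.

Lemma hierarchy_laminar B C : B \in hierarchy -> C \in hierarchy ->
  [disjoint B & C] \/ B \subset C \/ C \subset B.
Proof.
rewrite !inE => /andP[/existsP[k /existsP[a /eqP <-]] _].
move=> /andP[/existsP[l /existsP[b /eqP <-]] _].
have [kl|lk] := leqP k l.
  by case: (block_laminar a b (_ : levels`_k <= levels`_l));
    [rewrite leq_levels | left | right; right].
case: (block_laminar b a (_ : levels`_l <= levels`_k));
  [by rewrite leq_levels // ltnW | by rewrite disjoint_sym; left | by right; left].
Qed.

Lemma card_hierarchy B : B \in hierarchy -> (1 < #|B|)%N.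
Proof. by rewrite inE => /andP[]. Qed.

Section NonTrivial.

Variables x0 x1 : T.
Hypothesis x01 : x0 != x1.

Lemma size_levels_gt0 : (0 < size levels)%N.
Proof. by have := mem_levels x01; case: levels. Qed.

Lemma levels0_attained : exists i j, i != j /\ levels`_0 = d i j.
Proof. by apply: levelsP; rewrite mem_nth // size_levels_gt0. Qed.

Lemma is_level_block0 B : is_level_block 0 B = (B == setT).
Proof.
by apply/existsP/eqP => [[a /eqP <-]|->]; [|exists x0]; rewrite level_block0.
Qed.

Lemma is_level_blockT k : (k < size levels)%N -> is_level_block k setT = (k == 0)%N.
Proof.
move=> kN; case: k kN => [|k] kN; first by rewrite is_level_block0 eqxx.
apply/negbTE/existsP => -[a /eqP eT].
have [i [j [ij e0]]] := levels0_attained.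
have iB : i \in level_block k.+1 a by rewrite eT inE.
have : j \in level_block k.+1 i.
  by rewrite /level_block -(block_eq iB) -/(level_block _ a) eT inE.
by rewrite mem_level_block (negbTE ij) -e0 leq_levels ?size_levels_gt0.
Qed.

Lemma setT_in_hierarchy : setT \in hierarchy.
Proof.
rewrite inE; apply/andP; split; last by apply/card_gt1P; exists x0, x1.
apply/existsP; exists (Ordinal size_levels_gt0); by rewrite is_level_block0.
Qed.

Lemma weightT : weight setT = levels`_0.
Proof.
rewrite /weight (bigD1 (Ordinal size_levels_gt0)) ?is_level_block0 //= /level_gap subr0.
rewrite big1 ?addr0 // => k /andP[]; rewrite is_level_blockT // => /eqP k0.
by apply: contraNeq => _; apply/eqP/val_inj.
Qed.

End NonTrivial.

End Hierarchy.

Lemma exceptional_min n (A : 'M[rat]_n) : is_exceptional A ->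
  forall x y z, x != y -> y != z -> z != x ->
  Num.min (- A x y) (- A y z) <= - A z x.
Proof.
move=> Aexc x y z xy yz zx; rewrite -oppr_max lerN2 leNgt; apply/negP => zx_max.
have /= := Aexc _ _ _ xy yz zx.
have [xy_lt yz_lt] : A x y < A z x /\ A y z < A z x.
  by move: zx_max; rewrite gt_max => /andP.
rewrite (@max_r _ _ (A y z)) ?ltW // max_r ?ltW //.
by rewrite eqxx (lt_eqF xy_lt) (lt_eqF yz_lt).
Qed.

Lemma AT_offdiag n (B : {set 'I_n}) i j : i != j ->
  AT B i j = if (i \in B) && (j \in B) then -1 else 0.
Proof. by move=> ij; rewrite mxE (negbTE ij). Qed.

Lemma AT_row_sum n (B : {set 'I_n}) i : \sum_j AT B i j = 0.
Proof.
rewrite (bigD1 i) //= mxE eqxx.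
under eq_bigr => j ji do rewrite AT_offdiag 1?eq_sym //.
case: (boolP (i \in B)) => iB /=; last by rewrite big1 ?addr0.
rewrite -big_mkcondr /= sumr_const (cardD1 i B) iB /=.
have -> : #|[pred j | (j != i) && (j \in B)]| = #|[predD1 B & i]| by apply: eq_card.
by rewrite add1n mulNrn -addn1 natrD addrK subrr.
Qed.

Lemma row_sum_scalar_mx (R : pzRingType) n (a : R) (i : 'I_n) :
  \sum_j (a%:M : 'M_n) i j = a.
Proof.
rewrite (bigD1 i) //= big1 => [|j ji]; first by rewrite mxE eqxx mulr1n addr0.
by rewrite mxE eq_sym (negbTE ji) mulr0n.
Qed.

Lemma matrixP_offdiag_row_sum (R : zmodType) n (M M' : 'M[R]_n) :
  (forall i j, i != j -> M i j = M' i j) ->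
  (forall i, \sum_j M i j = \sum_j M' i j) -> M = M'.
Proof.
move=> offdiag rows; apply/matrixP => i j.
have [<-|] := eqVneq i j; last exact: offdiag.
have := rows i; rewrite (bigD1 i) //= [in RHS](bigD1 i) //=.
by rewrite (eq_bigr (M' i)) => [/addIr|k ki]; last by rewrite offdiag 1?eq_sym.
Qed.

Section TreeMatrix.

Variables (n : nat) (H : {set {set 'I_n}}) (g : {set 'I_n} -> rat).

Lemma tree_mx_offdiag i j : i != j ->
  (\sum_(B in H) g B *: AT B) i j = - \sum_(B in H | (i \in B) && (j \in B)) g B.
Proof.
move=> ij; rewrite summxE big_mkcondr -sumrN; apply: eq_bigr => B _.
by rewrite mxE AT_offdiag //; case: ifP; rewrite ?mulrN1 ?mulr0 ?oppr0.
Qed.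

Lemma tree_mx_row_sum i : \sum_j (\sum_(B in H) g B *: AT B) i j = 0.
Proof.
under eq_bigr do rewrite summxE.
rewrite exchange_big big1 // => B _.
by under eq_bigr do rewrite mxE; rewrite -mulr_sumr AT_row_sum mulr0.
Qed.

End TreeMatrix.

Theorem mainTheorem6 (n : nat) (A : 'M[rat]_n) (s : rat) :
  (2 <= n)%N ->
  A^T = A ->
  is_exceptional A ->
  is_magic A s ->
  exists (R : {set {set 'I_n}}) (gamma : {set 'I_n} -> rat),
    is_tree R gamma /\
    A = s%:M + \sum_(T in R) gamma T *: AT T /\
    (forall i j : 'I_n, i != j -> gamma [set: 'I_n] <= - A i j) /\
    (exists i j : 'I_n, i != j /\ gamma [set: 'I_n] = - A i j).
Proof.
move=> n2 Asym Aexc [rowsA _].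
pose d i j := - A i j.
have dC i j : d i j = d j i by rewrite /d -{1}Asym mxE.
have d_min := exceptional_min Aexc.
have i01 : Ordinal (ltnW n2) != Ordinal n2 by [].
exists (hierarchy d), (weight d).
split; last split; last split.
- split; first split; [exact: setT_in_hierarchy i01 | split|].
  + exact: card_hierarchy.
  + exact: hierarchy_laminar.
  + exact: weight_gt0.
- apply: matrixP_offdiag_row_sum => [i j ij|i].
    by rewrite !mxE (negbTE ij) mulr0n add0r tree_mx_offdiag // sum_weight_pair // opprK.
  under [RHS]eq_bigr do rewrite mxE.
  by rewrite big_split /= row_sum_scalar_mx tree_mx_row_sum addr0 rowsA.
- by rewrite (weightT dC d_min i01); exact: levels0_le.
- by rewrite (weightT dC d_min i01); exact: levels0_attained i01.
Qed.
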